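(* There is a number $c$ with $0<c<\min\{k_0/4,\ k_1|E_0|/2,\ k_2|\pi_0|^2/2\}$ such that $V^{-1}([0,c])$ is a compact subset of $U$ and the set of all critical points of $V$ in $V^{-1}([0,c])$ equals $V^{-1}(0)=\{(R,\Omega): R\in SO(3),\ E(\Omega)=E_0,\ \pi(R,\Omega)=\pi_0\}$.
   Context: $\mathbb I$ is a symmetric positive definite $3\times3$ matrix. $\mathbb R^{3\times3}\times\mathbb R^3$ carries the standard inner product ($\operatorname{trace}(A^TB)$ on matrices), $\|A\|=\sqrt{\operatorname{trace}(A^TA)}$, and gradients are taken with respect to it. Define $E(\Omega)=\tfrac12\Omega^T\mathbb I\Omega$ and $\pi(R,\Omega)=R\mathbb I\Omega$. Fix $R_0\in SO(3)$, $\Omega_0\in\mathbb R^3\setminus\{0\}$, $E_0=E(\Omega_0)$, $\pi_0=\pi(R_0,\Omega_0)$. Let $U=\{(R,\Omega)\in\mathbb R^{3\times3}\times\mathbb R^3:\det R>0\}$ and, with constants $k_0,k_1,k_2>0$, $$V(R,\Omega)=\tfrac{k_0}{4}\|R^TR-I\|^2+\tfrac{k_1}{2}|E(\Omega)-E_0|^2+\tfrac{k_2}{2}|\pi(R,\Omega)-\pi_0|^2$$ on $U$. *)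

From Stdlib Require Import Reals Lra List.
Open Scope R_scope.

(* Vectors of R^3 and 3x3 real matrices (row-major triples). *)
Definition vec3 : Type := (R * R * R)%type.
Definition mat3 : Type := (vec3 * vec3 * vec3)%type.

Definition vzero : vec3 := (0, 0, 0).

Definition vget (v : vec3) (i : nat) : R :=
  match v with (a, b, c) => match i with O => a | S O => b | _ => c end end.
Definition mk_vec (f : nat -> R) : vec3 := (f 0%nat, f 1%nat, f 2%nat).

Definition mrow (A : mat3) (i : nat) : vec3 :=
  match A with (r0, r1, r2) => match i with O => r0 | S O => r1 | _ => r2 end end.
Definition mget (A : mat3) (i j : nat) : R := vget (mrow A i) j.
Definition mk_mat (f : nat -> nat -> R) : mat3 :=
  (mk_vec (f 0%nat), mk_vec (f 1%nat), mk_vec (f 2%nat)).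

Definition sum3 (f : nat -> R) : R := f 0%nat + f 1%nat + f 2%nat.

Definition vadd (u v : vec3) : vec3 := mk_vec (fun i => vget u i + vget v i).
Definition vscale (t : R) (v : vec3) : vec3 := mk_vec (fun i => t * vget v i).
Definition vsub (u v : vec3) : vec3 := mk_vec (fun i => vget u i - vget v i).
Definition dot (u v : vec3) : R := sum3 (fun i => vget u i * vget v i).
Definition vnorm (v : vec3) : R := sqrt (dot v v).

Definition madd (A B : mat3) : mat3 := mk_mat (fun i j => mget A i j + mget B i j).
Definition mscale (t : R) (A : mat3) : mat3 := mk_mat (fun i j => t * mget A i j).
Definition msub (A B : mat3) : mat3 := mk_mat (fun i j => mget A i j - mget B i j).
Definition transpose (A : mat3) : mat3 := mk_mat (fun i j => mget A j i).
Definition mmul (A B : mat3) : mat3 :=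
  mk_mat (fun i j => sum3 (fun k => mget A i k * mget B k j)).
Definition mvmul (A : mat3) (v : vec3) : vec3 :=
  mk_vec (fun i => sum3 (fun k => mget A i k * vget v k)).
Definition mid : mat3 := mk_mat (fun i j => if Nat.eqb i j then 1 else 0).
Definition trace (A : mat3) : R := sum3 (fun i => mget A i i).
Definition det (A : mat3) : R :=
  mget A 0 0 * (mget A 1 1 * mget A 2 2 - mget A 1 2 * mget A 2 1)
  - mget A 0 1 * (mget A 1 0 * mget A 2 2 - mget A 1 2 * mget A 2 0)
  + mget A 0 2 * (mget A 1 0 * mget A 2 1 - mget A 1 1 * mget A 2 0).

Definition frob_inner (A B : mat3) : R := trace (mmul (transpose A) B).
Definition frob_norm (A : mat3) : R := sqrt (frob_inner A A).

Definition SO3 (Rm : mat3) : Prop := mmul (transpose Rm) Rm = mid /\ det Rm = 1.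

Definition sym_posdef (I : mat3) : Prop :=
  transpose I = I /\ (forall x : vec3, x <> vzero -> 0 < dot x (mvmul I x)).

Definition state : Type := (mat3 * vec3)%type.
Definition sadd (p q : state) : state := (madd (fst p) (fst q), vadd (snd p) (snd q)).
Definition sscale (t : R) (p : state) : state := (mscale t (fst p), vscale t (snd p)).
Definition snorm (p : state) : R :=
  sqrt (frob_inner (fst p) (fst p) + dot (snd p) (snd p)).
Definition sdist (p q : state) : R :=
  snorm (msub (fst p) (fst q), vsub (snd p) (snd q)).

Definition is_open (O : state -> Prop) : Prop :=
  forall x, O x -> exists eps, 0 < eps /\ forall y, sdist x y < eps -> O y.

Definition is_compact (S : state -> Prop) : Prop :=
  forall (Idx : Type) (O : Idx -> state -> Prop),
    (forall i, is_open (O i)) ->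
    (forall x, S x -> exists i, O i x) ->
    exists l : list Idx, forall x, S x -> exists i, In i l /\ O i x.

Definition critical (f : state -> R) (p : state) : Prop :=
  forall h : state, derivable_pt_lim (fun t => f (sadd p (sscale t h))) 0 0.

Definition Efun (I : mat3) (Om : vec3) : R := / 2 * dot Om (mvmul I Om).
Definition pifun (I : mat3) (Rm : mat3) (Om : vec3) : vec3 := mvmul (mmul Rm I) Om.

Definition U (p : state) : Prop := 0 < det (fst p).

Definition Vfun (I R0 : mat3) (Om0 : vec3) (k0 k1 k2 : R) (p : state) : R :=
  let Rm := fst p in let Om := snd p in
  k0 / 4 * (frob_norm (msub (mmul (transpose Rm) Rm) mid)) ^ 2
  + k1 / 2 * (Rabs (Efun I Om - Efun I Om0)) ^ 2
  + k2 / 2 * (vnorm (vsub (pifun I Rm Om) (pifun I R0 Om0))) ^ 2.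

(* Write A = R^T R - I, e = E(Omega) - E0 and d = pi(R, Omega) - pi0, so that V is a weighted
   sum of |A|^2, e^2 and |d|^2.  Small sublevel sets of V keep |A|, |e| and |d| small; then
   R^T R is close to I, so det R stays away from 0 and R, Omega are bounded, and these
   sublevel sets are compact by Heine-Borel.
   At a critical point the gradient equations give k0 (A + A^2) = k1 e Omega (I Omega)^T and
   k2 R^T d = - k1 e Omega.  If e = 0 this forces A = 0 and d = 0, i.e. V = 0.  If e <> 0,
   then Omega is an eigenvector of I (eigenvalue mu) and of A, d = -lam pi(R, Omega), and
   |pi0|^2 / (2 E0) = mu r, where r is a product of factors 1 + x with all x small and of the
   sign of e.  So mu would be an eigenvalue of I arbitrarily close to, yet different from,
   |pi0|^2 / (2 E0), which is impossible as the eigenvalues of I are isolated. *)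

From Stdlib Require Import Reals Lra List Classical ClassicalEpsilon FunctionalExtensionality.
From Coquelicot Require Import Coquelicot.
Open Scope R_scope.

(** * Real inequalities *)

Lemma Rabs_le_sqrt a s : a * a <= s -> Rabs a <= sqrt s.
Proof. intro H. rewrite <- sqrt_Rsqr_abs. apply sqrt_le_1_alt. exact H. Qed.

Lemma sqrt_lt_of_sq_lt s d : 0 <= s -> 0 < d -> s < d * d -> sqrt s < d.
Proof. intros Hs Hd H. rewrite <- (sqrt_square d) by lra. apply sqrt_lt_1_alt. lra. Qed.

Lemma exists_below_all (l : list R) :
  List.Forall (Rlt 0) l -> exists c, 0 < c /\ List.Forall (Rlt c) l.
Proof.
  induction 1 as [|q l Hq _ (c & Hc & Hl)]; [exists 1; split; [lra | constructor]|].
  exists (Rmin c q / 2). pose proof (Rmin_l c q). pose proof (Rmin_r c q).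
  assert (0 < Rmin c q) by (apply Rmin_pos; assumption).
  split; [lra|]. constructor; [lra|].
  refine (List.Forall_impl _ _ Hl). intros x Hx. lra.
Qed.

Lemma product_near_one s x1 x2 x3 x4 eta : 0 < eta <= / 100 ->
  0 < s * x1 -> 0 < s * x2 -> 0 < s * x3 -> 0 < s * x4 ->
  Rabs x1 <= eta -> Rabs x2 <= eta -> Rabs x3 <= eta -> Rabs x4 <= eta ->
  0 < s * ((1 + x1) * (1 + x2) * (1 + x3) * (1 + x4) - 1) /\
  Rabs ((1 + x1) * (1 + x2) * (1 + x3) * (1 + x4) - 1) <= 5 * eta.
Proof.
  intros He H1 H2 H3 H4 B1 B2 B3 B4.
  apply Rabs_le_between in B1, B2, B3, B4.
  destruct (Rtotal_order s 0) as [Hs|[Hs|Hs]]; [| subst; lra |].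
  - assert (x1 < 0 /\ x2 < 0 /\ x3 < 0 /\ x4 < 0) as (?&?&?&?) by (repeat split; nra).
    assert (1 - 2 * eta <= (1 + x1) * (1 + x2) < 1) by nra.
    assert (1 - 3 * eta <= (1 + x1) * (1 + x2) * (1 + x3) < 1) by nra.
    assert (1 - 4 * eta <= (1 + x1) * (1 + x2) * (1 + x3) * (1 + x4) < 1) by nra.
    split; [nra|]. apply Rabs_le; lra.
  - assert (0 < x1 /\ 0 < x2 /\ 0 < x3 /\ 0 < x4) as (?&?&?&?) by (repeat split; nra).
    assert (1 < (1 + x1) * (1 + x2) <= 1 + 3 * eta) by nra.
    assert (1 < (1 + x1) * (1 + x2) * (1 + x3) <= 1 + 4 * eta) by nra.
    assert (1 < (1 + x1) * (1 + x2) * (1 + x3) * (1 + x4) <= 1 + 5 * eta) by nra.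
    split; [nra|]. apply Rabs_le; lra.
Qed.

Lemma lambda_small lam e E E0 Q P k1 k2 eta : 0 < k1 -> 0 < k2 -> 0 < E0 -> 0 < Q -> 0 < P ->
  0 <= E <= 2 * E0 -> k2 * (lam * Q) = 2 * k1 * e * E ->
  P = (1 + lam) * (1 + lam) * Q -> 4 * (lam * lam * Q) <= P ->
  16 * k1 * Rabs e * E0 <= eta * k2 * P -> Rabs lam <= eta.
Proof.
  intros Hk1 Hk2 HE0 HQ HP0 HE Hlam HP Hd Hsmall.
  assert (Hsq : (1 + lam) * (1 + lam) <= 4).
  { assert (4 * (lam * lam) <= (1 + lam) * (1 + lam)) by nra. nra. }
  assert (HlQ : k2 * (Rabs lam * Q) = 2 * k1 * Rabs e * E).
  { rewrite <- (Rabs_pos_eq Q), <- (Rabs_pos_eq E), <- (Rabs_pos_eq k2), <- (Rabs_pos_eq k1)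
      by lra.
    rewrite <- !Rabs_mult, Hlam, !Rabs_mult, (Rabs_pos_eq 2) by lra. ring. }
  assert (k2 * (Rabs lam * P) <= eta * k2 * P).
  { assert (0 <= Rabs lam) by apply Rabs_pos. assert (0 <= Rabs e) by apply Rabs_pos.
    assert (H4 : k2 * (Rabs lam * P) <= 4 * (k2 * (Rabs lam * Q))).
    { rewrite HP. assert (0 <= k2 * Rabs lam * Q) by (apply Rmult_le_pos; nra). nra. }
    rewrite HlQ in H4.
    assert (0 <= k1 * Rabs e) by (apply Rmult_le_pos; lra). nra. }
  apply (Rmult_le_reg_l (k2 * P)); nra.
Qed.

(* The scalar relations at a critical point with e = E(Omega) - E0 <> 0, where mu and beta are
   the eigenvalues of I and of R^T R - I at Omega, and pi(R, Omega) - pi0 = - lam pi(R, Omega). *)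
Lemma eigenvalue_ratio_near_one e lam beta mu n Q E E0 P k0 k1 k2 eta :
  0 < k0 -> 0 < k1 -> 0 < k2 -> 0 < E0 -> 0 < P -> 0 < n -> 0 < mu ->
  0 < eta <= / 100 -> e <> 0 -> Rabs beta <= eta ->
  beta + beta * beta = k1 * e / k0 * (mu * n) ->
  lam = k1 * e / (k2 * (mu * (1 + beta))) ->
  Q = mu * mu * (1 + beta) * n -> E = mu * n / 2 -> E = E0 + e ->
  P = (1 + lam) * (1 + lam) * Q -> 4 * (lam * lam * Q) <= P ->
  Rabs e <= eta * E0 -> 16 * k1 * Rabs e * E0 <= eta * k2 * P ->
  exists r, P / (2 * E0) = mu * r /\ r <> 1 /\ Rabs (r - 1) <= 5 * eta.
Proof.
  intros Hk0 Hk1 Hk2 HE0 HP Hn Hmu Heta He Hb Hbeta Hlam HQ HE HEe HPQ Hd Hsmall Hsmall'.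
  pose proof Hb as Hb'. apply Rabs_le_between in Hb'.
  assert (Hmb : 0 < mu * (1 + beta)) by nra.
  assert (Hlam_small : Rabs lam <= eta).
  { apply (lambda_small lam e E E0 Q P k1 k2 eta); try lra.
    - rewrite HQ. apply Rmult_lt_0_compat; nra.
    - apply Rabs_le_between in Hsmall. split; nra.
    - rewrite HE, HQ, Hlam. field. lra. }
  assert (Hee : 0 < e * e) by (apply Rsqr_pos_lt in He; exact He).
  assert (Hle : 0 < e * lam).
  { rewrite Hlam. replace (e * (k1 * e / (k2 * (mu * (1 + beta)))))
      with (k1 * (e * e) / (k2 * (mu * (1 + beta)))) by (field; lra).
    apply Rdiv_lt_0_compat; apply Rmult_lt_0_compat; lra. }
  assert (Hbe : 0 < e * beta).
  { assert (0 < e * beta * (1 + beta)); [|nra].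
    replace (e * beta * (1 + beta)) with (e * (beta + beta * beta)) by ring.
    rewrite Hbeta. replace (e * (k1 * e / k0 * (mu * n))) with (k1 * (e * e) * mu * n / k0)
      by (field; lra).
    apply Rdiv_lt_0_compat; [|lra].
    apply Rmult_lt_0_compat; [apply Rmult_lt_0_compat; [apply Rmult_lt_0_compat|]|]; lra. }
  assert (Hrel : Rabs (e / E0) <= eta).
  { unfold Rdiv. rewrite Rabs_mult, Rabs_inv, (Rabs_pos_eq E0) by lra.
    apply (Rmult_le_reg_r E0); [lra|]. field_simplify; lra. }
  assert (Hee0 : 0 < e * (e / E0)).
  { replace (e * (e / E0)) with (e * e / E0) by (field; lra). apply Rdiv_lt_0_compat; lra. }
  destruct (product_near_one e lam lam beta (e / E0) eta Heta Hle Hle Hbe Hee0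
              Hlam_small Hlam_small Hb Hrel) as [Hsign Hclose].
  exists ((1 + lam) * (1 + lam) * (1 + beta) * (1 + e / E0)). split; [|split].
  - rewrite HPQ, HQ. replace (1 + e / E0) with (E / E0) by (rewrite HEe; field; lra).
    rewrite HE. field. lra.
  - intro H1. rewrite H1 in Hsign. lra.
  - exact Hclose.
Qed.

Lemma nonzero_near_zero a (g : R -> R) B : a <> 0 ->
  (forall h, Rabs h <= 1 -> Rabs (g h) <= B) ->
  exists del, 0 < del /\ forall h, Rabs h < del -> a + h * g h <> 0.
Proof.
  intros Ha Hg. assert (Ha' : 0 < Rabs a) by (apply Rabs_pos_lt; exact Ha).
  assert (HB : 0 <= B)
    by (specialize (Hg 0); rewrite Rabs_R0 in Hg; pose proof (Rabs_pos (g 0)); lra).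
  exists (Rmin 1 (Rabs a / (B + 1))). split.
  { apply Rmin_pos; [lra|]. apply Rdiv_lt_0_compat; lra. }
  intros h Hh Hz.
  assert (H1 : Rabs h <= 1) by (pose proof (Rmin_l 1 (Rabs a / (B + 1))); lra).
  assert (H2 : Rabs h * (B + 1) < Rabs a).
  { pose proof (Rmin_r 1 (Rabs a / (B + 1))).
    assert (Hlt : Rabs h < Rabs a / (B + 1)) by lra.
    apply (Rmult_lt_compat_r (B + 1)) in Hlt; [|lra].
    replace (Rabs a / (B + 1) * (B + 1)) with (Rabs a) in Hlt by (field; lra). exact Hlt. }
  assert (Rabs a = Rabs h * Rabs (g h)) by (rewrite <- Rabs_mult, <- Rabs_Ropp; f_equal; lra).
  pose proof (Hg h H1). pose proof (Rabs_pos h). nra.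
Qed.

Lemma cubic_root_isolated a0 a1 a2 : exists del, 0 < del /\
  forall h, Rabs h < del -> a0 + h * (a1 + h * (a2 - h)) = 0 -> h = 0.
Proof.
  assert (bound : forall h c, Rabs h <= 1 -> Rabs (c - h) <= Rabs c + 1).
  { intros h c Hh. unfold Rminus. pose proof (Rabs_triang c (- h)) as Ht.
    rewrite Rabs_Ropp in Ht. lra. }
  destruct (Req_dec a0 0) as [-> | H0].
  - destruct (Req_dec a1 0) as [-> | H1].
    + destruct (Req_dec a2 0) as [-> | H2].
      * exists 1. split; [lra|]. intros h _ Hh. assert (Hcube : h * (h * h) = 0) by lra.
        apply Rmult_integral in Hcube as [|Hsq]; [auto|].
        apply Rmult_integral in Hsq as [|]; auto.
      * destruct (nonzero_near_zero a2 (fun _ => -1) 1 H2) as (del & Hdel & Hnz).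
        { intros. apply Rabs_le. lra. }
        exists del. split; [exact Hdel|]. intros h Hh Heq.
        destruct (Req_dec h 0) as [|Hn]; [auto|]. exfalso. apply (Hnz h Hh).
        apply (Rmult_eq_reg_l (h * h)); [lra|]. apply Rmult_integral_contrapositive; auto.
    + destruct (nonzero_near_zero a1 (fun h => a2 - h) (Rabs a2 + 1) H1 (fun h Hh => bound h a2 Hh))
        as (del & Hdel & Hnz).
      exists del. split; [exact Hdel|]. intros h Hh Heq.
      destruct (Req_dec h 0) as [|Hn]; [auto|]. exfalso. apply (Hnz h Hh).
      apply (Rmult_eq_reg_l h); [lra|exact Hn].
  - destruct (nonzero_near_zero a0 (fun h => a1 + h * (a2 - h)) (Rabs a1 + (Rabs a2 + 1)) H0)
      as (del & Hdel & Hnz).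
    { intros h Hh. eapply Rle_trans; [apply Rabs_triang|]. rewrite Rabs_mult.
      pose proof (bound h a2 Hh). pose proof (Rabs_pos h). pose proof (Rabs_pos (a2 - h)). nra. }
    exists del. split; [exact Hdel|]. intros h Hh Heq. exfalso. exact (Hnz h Hh Heq).
Qed.

Lemma triangular_sq_bound a11 a12 a13 d c C1 C2 C3 : 0 < a11 -> 0 < d ->
  exists M, forall x y z,
    (a11 * x + a12 * y + a13 * z) * (a11 * x + a12 * y + a13 * z) <= C1 ->
    (d * y + c * z) * (d * y + c * z) <= C2 -> z * z <= C3 ->
    x * x + y * y + z * z <= M.
Proof.
  intros H11 Hd.
  set (B2 := (2 * C2 + 2 * (c * c) * C3) / (d * d)).
  set (B1 := 3 * (C1 + a12 * a12 * B2 + a13 * a13 * C3) / (a11 * a11)).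
  exists (B1 + B2 + C3). intros x y z H1 H2 H3.
  assert (Hy : y * y <= B2).
  { unfold B2. apply (Rmult_le_reg_l (d * d)); [nra|].
    replace (d * d * ((2 * C2 + 2 * (c * c) * C3) / (d * d)))
      with (2 * C2 + 2 * (c * c) * C3) by (field; lra).
    set (L2 := d * y + c * z) in H2.
    replace (d * d * (y * y)) with ((L2 - c * z) * (L2 - c * z)) by (unfold L2; ring).
    pose proof (Rle_0_sqr (L2 + c * z)). unfold Rsqr in *.
    assert (c * c * (z * z) <= c * c * C3) by (apply Rmult_le_compat_l; nra).
    assert (2 * (L2 * L2) + 2 * (c * c * (z * z)) - (L2 - c * z) * (L2 - c * z)
            = (L2 + c * z) * (L2 + c * z)) by ring.
    lra. }
  assert (Hx : x * x <= B1).
  { unfold B1. apply (Rmult_le_reg_l (a11 * a11)); [nra|].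
    replace (a11 * a11 * (3 * (C1 + a12 * a12 * B2 + a13 * a13 * C3) / (a11 * a11)))
      with (3 * (C1 + a12 * a12 * B2 + a13 * a13 * C3)) by (field; lra).
    set (L1 := a11 * x + a12 * y + a13 * z) in H1.
    replace (a11 * a11 * (x * x)) with ((L1 - a12 * y - a13 * z) * (L1 - a12 * y - a13 * z))
      by (unfold L1; ring).
    assert (a12 * a12 * (y * y) <= a12 * a12 * B2) by (apply Rmult_le_compat_l; nra).
    assert (a13 * a13 * (z * z) <= a13 * a13 * C3) by (apply Rmult_le_compat_l; nra).
    pose proof (Rle_0_sqr (L1 + a12 * y)); pose proof (Rle_0_sqr (L1 + a13 * z));
    pose proof (Rle_0_sqr (a12 * y - a13 * z)); unfold Rsqr in *.
    assert (3 * (L1 * L1 + a12 * a12 * (y * y) + a13 * a13 * (z * z))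
            - (L1 - a12 * y - a13 * z) * (L1 - a12 * y - a13 * z)
            = (L1 + a12 * y) * (L1 + a12 * y) + (L1 + a13 * z) * (L1 + a13 * z)
              + (a12 * y - a13 * z) * (a12 * y - a13 * z)) by ring.
    lra. }
  lra.
Qed.

Lemma list_choice {A B : Type} (P : A -> Prop) (Q : A -> B -> Prop) (l : list A) :
  (forall a, P a -> exists b, Q a b) ->
  exists lb : list B, forall a, In a l -> P a -> exists b, In b lb /\ Q a b.
Proof.
  intro H. induction l as [|a l [lb IH]]; [exists nil; intros _ []|].
  destruct (classic (P a)) as [Pa|nPa].
  - destruct (H a Pa) as [b Qb]. exists (b :: lb). intros a' [<-|Ha'] Pa'.
    + exists b. split; [left|]; auto.
    + destruct (IH a' Ha' Pa') as (b' & Hb' & Qb'). exists b'. split; [right|]; auto.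
  - exists lb. intros a' [<-|Ha'] Pa'; [contradiction|]. auto.
Qed.

(** * Vectors and matrices *)

Definition mzero : mat3 := mk_mat (fun _ _ => 0).
Definition outer (u v : vec3) : mat3 := mk_mat (fun i j => vget u i * vget v j).
Definition adjugate (M : mat3) : mat3 :=
  let '((a, b, c), (d, e, f), (g, h, i)) := M in
  ((e*i - f*h, c*h - b*i, b*f - c*e),
   (f*g - d*i, a*i - c*g, c*d - a*f),
   (d*h - e*g, b*g - a*h, a*e - b*d)).
Definition orth_defect (Rm : mat3) : mat3 := msub (mmul (transpose Rm) Rm) mid.

Ltac expand := cbv beta iota zeta delta [vzero vget mk_vec mrow mget mk_mat sum3 vadd
  vscale vsub dot madd mscale msub transpose mmul mvmul mid trace det frob_inner sadd
  sscale fst snd Efun pifun Nat.eqb adjugate outer orth_defect mzero] in *.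
(* Only variables occurring in the goal are split: destruct cannot clear a section variable,
   so an unconditional match would loop. *)
Ltac destruct_all := repeat match goal with
  | A : mat3 |- _ => lazymatch goal with |- context [A] =>
                       destruct A as [[[[? ?] ?] [[? ?] ?]] [[? ?] ?]] end
  | v : vec3 |- _ => lazymatch goal with |- context [v] => destruct v as [[? ?] ?] end
  | p : state |- _ => lazymatch goal with |- context [p] => destruct p end
  end.
Ltac split_pairs := repeat match goal with |- (_, _) = (_, _) => f_equal end.
Ltac mat_ring := intros; destruct_all; expand; split_pairs; ring.

Lemma mvmul_mmul A B v : mvmul (mmul A B) v = mvmul A (mvmul B v). Proof. mat_ring. Qed.
Lemma mvmul_madd A B v : mvmul (madd A B) v = vadd (mvmul A v) (mvmul B v). Proof. mat_ring. Qed.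
Lemma mvmul_mid v : mvmul mid v = v. Proof. mat_ring. Qed.
Lemma mvmul_vscale A c v : mvmul A (vscale c v) = vscale c (mvmul A v). Proof. mat_ring. Qed.
Lemma mvmul_vzero A : mvmul A vzero = vzero. Proof. mat_ring. Qed.
Lemma mvmul_mscale_outer t u v x : mvmul (mscale t (outer u v)) x = vscale (t * dot v x) u.
Proof. mat_ring. Qed.
Lemma vscale_vscale a b v : vscale a (vscale b v) = vscale (a * b) v. Proof. mat_ring. Qed.
Lemma vscale_0 v : vscale 0 v = vzero. Proof. mat_ring. Qed.
Lemma transpose_mscale_outer t u v : transpose (mscale t (outer u v)) = mscale t (outer v u).
Proof. mat_ring. Qed.
Lemma mvmul_adjugate M v : mvmul (adjugate M) (mvmul M v) = vscale (det M) v. Proof. mat_ring. Qed.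
Lemma mmul_adjugate M X : mmul (adjugate M) (mmul M X) = mscale (det M) X. Proof. mat_ring. Qed.
Lemma det_transpose M : det (transpose M) = det M. Proof. mat_ring. Qed.
Lemma det_gram M : det (mmul (transpose M) M) = det M * det M. Proof. mat_ring. Qed.
Lemma dot_comm u v : dot u v = dot v u. Proof. mat_ring. Qed.
Lemma dot_vscale_l c u v : dot (vscale c u) v = c * dot u v. Proof. mat_ring. Qed.
Lemma dot_vscale_r c u v : dot u (vscale c v) = c * dot u v. Proof. mat_ring. Qed.
Lemma dot_mvmul M u v : dot (mvmul M u) v = dot u (mvmul (transpose M) v). Proof. mat_ring. Qed.
Lemma dot_vzero_l v : dot vzero v = 0. Proof. mat_ring. Qed.
Lemma dot_vzero_r v : dot v vzero = 0.
Proof. mat_ring. Qed.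
Lemma frob_mzero_l A : frob_inner mzero A = 0. Proof. mat_ring. Qed.
Lemma frob_mzero_r A : frob_inner A mzero = 0. Proof. mat_ring. Qed.
Lemma mscale_0 X : mscale 0 X = mzero.
Proof. mat_ring. Qed.
Lemma vsub_diag v : vsub v v = vzero.
Proof. mat_ring. Qed.
Lemma mvmul_msub_scalar M c v : mvmul (msub M (mscale c mid)) v = vsub (mvmul M v) (vscale c v).
Proof. mat_ring. Qed.
Lemma gram_eq_defect Rm : mmul (transpose Rm) Rm = madd (orth_defect Rm) mid.
Proof. mat_ring. Qed.
Lemma mmul_shifted_defect A : mmul (madd A mid) A = madd A (mmul A A).
Proof. mat_ring. Qed.
Lemma orth_defect_quadratic_symmetric Rm :
  transpose (madd (orth_defect Rm) (mmul (orth_defect Rm) (orth_defect Rm)))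
  = madd (orth_defect Rm) (mmul (orth_defect Rm) (orth_defect Rm)).
Proof. mat_ring. Qed.
Lemma mmul_mzero_sub_outer_vzero M u : msub (mmul M mzero) (outer vzero u) = mzero.
Proof. mat_ring. Qed.
Lemma mmul_transpose_gradient_form Rm A d u a b :
  mmul (transpose Rm) (madd (mscale a (mmul Rm A)) (mscale b (outer d u)))
  = madd (mscale a (mmul (mmul (transpose Rm) Rm) A)) (mscale b (outer (mvmul (transpose Rm) d) u)).
Proof. mat_ring. Qed.
Lemma trace_shift A : trace (madd A mid) = mget A 0 0 + mget A 1 1 + mget A 2 2 + 3.
Proof. destruct_all. expand. ring. Qed.

Lemma dot_self_nonneg v : 0 <= dot v v. Proof. destruct_all; expand; nra. Qed.

Lemma frob_self_nonneg A : 0 <= frob_inner A A. Proof. destruct_all; expand; nra. Qed.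

Lemma dot_self_eq0 v : dot v v = 0 -> v = vzero.
Proof. destruct_all; expand; intro H; split_pairs; nra. Qed.

Lemma frob_self_eq0 A : frob_inner A A = 0 -> A = mzero.
Proof. destruct_all; expand; intro H; split_pairs; nra. Qed.

Lemma dot_self_pos v : v <> vzero -> 0 < dot v v.
Proof.
  intro Hv. destruct (Rle_lt_or_eq_dec _ _ (dot_self_nonneg v)) as [|H]; auto.
  now contradict Hv; apply dot_self_eq0.
Qed.

Lemma vsub_eq_vzero u v : vsub u v = vzero <-> u = v.
Proof.
  split; [|intros ->; apply vsub_diag].
  intro H. destruct_all. expand. injection H; intros. split_pairs; lra.
Qed.

Lemma vsub_eq_vscale a b l : vsub a b = vscale (- l) a -> b = vscale (1 + l) a.
Proof. intro H. destruct_all. expand. injection H; intros. split_pairs; lra. Qed.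

Lemma vscale_cancel a b v : 0 < dot v v -> vscale a v = vscale b v -> a = b.
Proof.
  intros Hv H. apply (f_equal (fun x => dot x v)) in H.
  rewrite !dot_vscale_l in H. nra.
Qed.

Lemma vadd_vscale_solve a k w y : k <> 0 -> vadd (vscale a w) (vscale k y) = vzero ->
  y = vscale (- a / k) w.
Proof.
  intros Hk H. destruct_all. expand. injection H; intros. split_pairs;
  apply (Rmult_eq_reg_l k); try exact Hk; field_simplify; lra.
Qed.

Lemma mscale_solve k c S W : k <> 0 -> madd (mscale k S) (mscale (- c) W) = mzero ->
  S = mscale (c / k) W.
Proof.
  intros Hk H. destruct_all. expand. injection H; intros. split_pairs;
  apply (Rmult_eq_reg_l k); try exact Hk; field_simplify; lra.
Qed.

Lemma mvmul_cancel M u v : det M <> 0 -> mvmul M u = mvmul M v -> u = v.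
Proof.
  intros Hd H. apply (f_equal (mvmul (adjugate M))) in H. rewrite !mvmul_adjugate in H.
  revert H Hd; generalize (det M); intros d H Hd.
  destruct_all; expand; injection H; intros; split_pairs; apply (Rmult_eq_reg_l d); lra.
Qed.

Lemma mvmul_injective M v : det M <> 0 -> mvmul M v = vzero -> v = vzero.
Proof. intros Hd Hv. apply (mvmul_cancel M); [exact Hd|]. now rewrite mvmul_vzero. Qed.

Lemma det_eq0_of_kernel M v : v <> vzero -> mvmul M v = vzero -> det M = 0.
Proof.
  intros Hv HM. apply NNPP; intro Hd. exact (Hv (mvmul_injective M v Hd HM)).
Qed.

Lemma mmul_injective M X : det M <> 0 -> mmul M X = mzero -> X = mzero.
Proof.
  intros Hd HX. apply (f_equal (mmul (adjugate M))) in HX.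
  rewrite mmul_adjugate in HX. revert HX Hd; generalize (det M); intros d HX Hd.
  destruct_all; expand; injection HX; intros; split_pairs; apply (Rmult_eq_reg_l d); lra.
Qed.

Lemma SO3_iff_defect Rm : SO3 Rm <-> orth_defect Rm = mzero /\ 0 < det Rm.
Proof.
  unfold SO3. rewrite gram_eq_defect. split.
  - intros [H Hd]. split; [|lra]. revert H. generalize (orth_defect Rm). intros A H.
    destruct_all. expand. injection H; intros; split_pairs; lra.
  - intros [HA Hd]. rewrite HA. split; [mat_ring|].
    pose proof (det_gram Rm) as H. rewrite gram_eq_defect, HA in H.
    replace (det (madd mzero mid)) with 1 in H by (expand; ring). nra.
Qed.

Lemma mvmul_cauchy_schwarz M v : dot (mvmul M v) (mvmul M v) <= frob_inner M M * dot v v.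
Proof.
  assert (row : forall a b c x y z,
    (a*x + b*y + c*z) * (a*x + b*y + c*z) <= (a*a + b*b + c*c) * (x*x + y*y + z*z)).
  { intros. assert (0 <= (a*y - b*x)^2 + (a*z - c*x)^2 + (b*z - c*y)^2) by
      (repeat apply Rplus_le_le_0_compat; apply pow2_ge_0). nra. }
  destruct M as [[[[a b] c] [[d e] f]] [[g h] i]]; destruct v as [[x y] z]; expand.
  pose proof (row a b c x y z); pose proof (row d e f x y z); pose proof (row g h i x y z).
  lra.
Qed.

Lemma eigenvalue_sq_le_frob A w beta : w <> vzero -> mvmul A w = vscale beta w ->
  beta * beta <= frob_inner A A.
Proof.
  intros Hw HAw. pose proof (mvmul_cauchy_schwarz A w) as Hcs. pose proof (dot_self_pos w Hw).
  rewrite HAw, dot_vscale_l, dot_vscale_r in Hcs. apply (Rmult_le_reg_r (dot w w)); nra.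
Qed.

Lemma symmetric_outer_parallel w u t : 0 < dot w w -> t <> 0 ->
  transpose (mscale t (outer w u)) = mscale t (outer w u) ->
  u = vscale (dot u w / dot w w) w.
Proof.
  intros Hw Ht H. rewrite transpose_mscale_outer in H.
  apply (f_equal (fun M => mvmul M w)) in H. rewrite !mvmul_mscale_outer in H.
  apply (f_equal (vscale (/ (t * dot w w)))) in H. rewrite !vscale_vscale in H.
  replace (/ (t * dot w w) * (t * dot w w)) with 1 in H by (field; lra).
  replace (/ (t * dot w w) * (t * dot u w)) with (dot u w / dot w w) in H by (field; lra).
  rewrite <- H. mat_ring.
Qed.

Lemma rank_one_quadratic_eigen A w u t : 0 < dot w w -> t * dot u w <> 0 ->
  madd A (mmul A A) = mscale t (outer w u) ->
  exists beta, mvmul A w = vscale beta w /\ beta + beta * beta = t * dot u w.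
Proof.
  intros Hw Ht H.
  assert (HB : forall v, mvmul (madd A (mmul A A)) v = vscale (t * dot u v) w)
    by (intro v; rewrite H; apply mvmul_mscale_outer).
  (* A commutes with A + A^2, whose range is spanned by w. *)
  assert (Hcomm : mvmul A (mvmul (madd A (mmul A A)) w)
                  = mvmul (madd A (mmul A A)) (mvmul A w)) by mat_ring.
  rewrite !HB, mvmul_vscale in Hcomm.
  set (beta := t * dot u (mvmul A w) / (t * dot u w)).
  assert (HAw : mvmul A w = vscale beta w).
  { transitivity (vscale (/ (t * dot u w)) (vscale (t * dot u w) (mvmul A w))).
    - rewrite vscale_vscale, Rinv_l by exact Ht. mat_ring.
    - rewrite Hcomm, vscale_vscale. f_equal. unfold beta, Rdiv. ring. }
  clearbody beta. exists beta. split; [exact HAw|].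
  apply (vscale_cancel _ _ w Hw). rewrite <- HB, mvmul_madd, mvmul_mmul, HAw, mvmul_vscale, HAw.
  mat_ring.
Qed.

Lemma eigenvalue_isolated M mu0 : exists del, 0 < del /\
  forall mu, det (msub M (mscale mu mid)) = 0 -> Rabs (mu - mu0) < del -> mu = mu0.
Proof.
  set (N := msub M (mscale mu0 mid)).
  set (minors := mget N 0 0 * mget N 1 1 - mget N 0 1 * mget N 1 0
               + mget N 0 0 * mget N 2 2 - mget N 0 2 * mget N 2 0
               + mget N 1 1 * mget N 2 2 - mget N 1 2 * mget N 2 1).
  destruct (cubic_root_isolated (det N) (- minors) (trace N)) as (del & Hdel & Hiso).
  exists del. split; [exact Hdel|]. intros mu Hmu Hsmall.
  enough (mu - mu0 = 0) by lra. apply (Hiso _ Hsmall). rewrite <- Hmu.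
  unfold minors, N. clear. destruct M as [[[[a b] c] [[d e] f]] [[g h] k]]. expand. ring.
Qed.

Lemma frob_entry_sq A i j : mget A i j * mget A i j <= frob_inner A A.
Proof.
  destruct A as [[[[a b] c] [[d e] f]] [[g h] k]].
  destruct i as [|[|i]]; destruct j as [|[|j]]; expand;
  pose proof (Rle_0_sqr a); pose proof (Rle_0_sqr b); pose proof (Rle_0_sqr c);
  pose proof (Rle_0_sqr d); pose proof (Rle_0_sqr e); pose proof (Rle_0_sqr f);
  pose proof (Rle_0_sqr g); pose proof (Rle_0_sqr h); pose proof (Rle_0_sqr k);
  unfold Rsqr in *; lra.
Qed.

Lemma frob_small_entry A i j : frob_inner A A <= / 10000 -> - / 100 <= mget A i j <= / 100.
Proof. intro H. pose proof (frob_entry_sq A i j). nra. Qed.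

Lemma det_near_identity A : frob_inner A A <= / 10000 -> / 4 <= det (madd A mid).
Proof.
  intro H. pose proof (fun i j => frob_small_entry A i j H) as B.
  pose proof (B 0 0)%nat; pose proof (B 0 1)%nat; pose proof (B 0 2)%nat;
  pose proof (B 1 0)%nat; pose proof (B 1 1)%nat; pose proof (B 1 2)%nat;
  pose proof (B 2 0)%nat; pose proof (B 2 1)%nat; pose proof (B 2 2)%nat.
  clear B H. destruct A as [[[[a b] c] [[d e] f]] [[g h] k]]. expand.
  assert (P1 : 99/100 * (99/100) <= (e + 1) * (k + 1)) by nra.
  assert (P2 : - / 10000 <= f * h <= / 10000) by (split; nra).
  assert (P3 : - 102 / 10000 <= d * (k + 1) - f * g <= 102 / 10000) by (split; nra).
  assert (P4 : - 102 / 10000 <= d * h - (e + 1) * g <= 102 / 10000) by (split; nra).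
  assert (- 102 / 1000000 <= b * (d * (k + 1) - f * g) <= 102 / 1000000) by (split; nra).
  assert (- 102 / 1000000 <= c * (d * h - (e + 1) * g) <= 102 / 1000000) by (split; nra).
  assert (99/100 * ((e + 1) * (k + 1) - f * h) <= (a + 1) * ((e + 1) * (k + 1) - f * h)) by nra.
  nra.
Qed.

(* Sylvester's criterion, tested on e1, (a12, -a11, 0) and the last column of the adjugate. *)
Lemma posdef_leading_minors a11 a12 a13 a22 a23 a33 :
  (forall x y z, 0 < x * x + y * y + z * z ->
     0 < x * (a11*x + a12*y + a13*z) + y * (a12*x + a22*y + a23*z) + z * (a13*x + a23*y + a33*z)) ->
  0 < a11 /\ 0 < a11 * a22 - a12 * a12 /\
  0 < a11 * (a22 * a33 - a23 * a23) - a12 * (a12 * a33 - a23 * a13)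
      + a13 * (a12 * a23 - a22 * a13).
Proof.
  intro HP. set (D2 := a11 * a22 - a12 * a12).
  assert (H11 : 0 < a11) by (specialize (HP 1 0 0 ltac:(lra)); lra).
  assert (HD2 : 0 < D2).
  { specialize (HP a12 (- a11) 0 ltac:(nra)).
    match type of HP with 0 < ?e => replace e with (a11 * D2) in HP by (unfold D2; ring) end.
    nra. }
  split; [exact H11|]. split; [exact HD2|].
  specialize (HP (a12 * a23 - a13 * a22) (a13 * a12 - a11 * a23) D2
    ltac:(pose proof (Rmult_lt_0_compat D2 D2 HD2 HD2);
          pose proof (Rle_0_sqr (a12 * a23 - a13 * a22));
          pose proof (Rle_0_sqr (a13 * a12 - a11 * a23)); unfold Rsqr in *; lra)).
  match type of HP with 0 < ?e =>
    replace e with ((a11 * (a22 * a33 - a23 * a23) - a12 * (a12 * a33 - a23 * a13)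
                     + a13 * (a12 * a23 - a22 * a13)) * D2) in HP by (unfold D2; ring) end.
  nra.
Qed.

Lemma posdef_sublevel_bounded I K : sym_posdef I ->
  exists M, forall x, dot x (mvmul I x) <= K -> dot x x <= M.
Proof.
  intros [HT HP]. destruct I as [[[[a11 a12] a13] [[a21 a22] a23]] [[a31 a32] a33]].
  expand. injection HT; intros; subst a21 a31 a32.
  destruct (posdef_leading_minors a11 a12 a13 a22 a23 a33) as (H11 & HD2 & HD3).
  { intros x y z Hn. refine (let H := HP (x, y, z) _ in ltac:(expand; lra)).
    intro E. unfold vzero in E. injection E as -> -> ->. lra. }
  set (D2 := a11 * a22 - a12 * a12) in *.
  set (D3 := a11 * (a22 * a33 - a23 * a23) - a12 * (a12 * a33 - a23 * a13)
             + a13 * (a12 * a23 - a22 * a13)) in *.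
  set (c := a11 * a23 - a12 * a13).
  destruct (triangular_sq_bound a11 a12 a13 D2 c (a11 * K) (a11 * D2 * K) (D2 * K / D3) H11 HD2)
    as [M HM].
  exists M. intros [[x y] z] HK. expand.
  set (T := x * (a11*x + a12*y + a13*z) + y * (a12*x + a22*y + a23*z)
            + z * (a13*x + a23*y + a33*z)) in HK.
  set (L1 := a11 * x + a12 * y + a13 * z). set (L2 := D2 * y + c * z).
  (* Completing the square. *)
  assert (Hsq : a11 * D2 * T = D2 * (L1 * L1) + L2 * L2 + a11 * D3 * (z * z))
    by (unfold T, L1, L2, D2, D3, c; ring).
  assert (a11 * D2 * T <= a11 * D2 * K) by (apply Rmult_le_compat_l; nra).
  assert (0 <= D2 * (L1 * L1)) by (apply Rmult_le_pos; [lra | apply Rle_0_sqr]).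
  assert (0 <= L2 * L2) by apply Rle_0_sqr.
  assert (0 <= a11 * D3 * (z * z)) by (apply Rmult_le_pos; [nra | apply Rle_0_sqr]).
  apply HM; fold L1 L2.
  - apply (Rmult_le_reg_l D2); lra.
  - lra.
  - apply (Rmult_le_reg_l (a11 * D3)); [nra|].
    replace (a11 * D3 * (D2 * K / D3)) with (a11 * D2 * K) by (field; lra). lra.
Qed.

(** * Continuity and compactness on R^(3x3) x R^3 *)

Ltac squares_nonneg := repeat match goal with
  | |- context [?t * ?t] => lazymatch goal with
                          | _ : 0 <= t * t |- _ => fail
                          | _ => assert (0 <= t * t) by apply Rle_0_sqr end end.

Lemma mget_le_sdist x y i j : Rabs (mget (fst x) i j - mget (fst y) i j) <= sdist x y.
Proof.
  apply Rabs_le_sqrt. destruct_all.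
  destruct i as [|[|i]]; destruct j as [|[|j]]; expand; squares_nonneg; lra.
Qed.

Lemma vget_le_sdist x y k : Rabs (vget (snd x) k - vget (snd y) k) <= sdist x y.
Proof. apply Rabs_le_sqrt. destruct_all. destruct k as [|[|k]]; expand; squares_nonneg; lra. Qed.

Definition scont (f : state -> R) : Prop :=
  forall x eps, 0 < eps ->
    exists del, 0 < del /\ forall y, sdist x y < del -> Rabs (f y - f x) < eps.

Lemma scont_ext f g : (forall p, f p = g p) -> scont f -> scont g.
Proof.
  intros Hfg Hf. replace g with f by (apply functional_extensionality; exact Hfg). exact Hf.
Qed.

Lemma scont_const c : scont (fun _ => c).
Proof.
  intros x eps He. exists 1. split; [lra|]. intros. rewrite Rminus_diag, Rabs_R0. exact He.
Qed.

Lemma scont_mget i j : scont (fun p => mget (fst p) i j).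
Proof.
  intros x eps He. exists eps. split; [exact He|]. intros y Hy.
  rewrite Rabs_minus_sym. eapply Rle_lt_trans; [apply mget_le_sdist | exact Hy].
Qed.

Lemma scont_vget k : scont (fun p => vget (snd p) k).
Proof.
  intros x eps He. exists eps. split; [exact He|]. intros y Hy.
  rewrite Rabs_minus_sym. eapply Rle_lt_trans; [apply vget_le_sdist | exact Hy].
Qed.

Lemma scont_opp f : scont f -> scont (fun p => - f p).
Proof.
  intros Hf x eps He. destruct (Hf x eps He) as (del & Hdel & H). exists del. split; [exact Hdel|].
  intros y Hy. rewrite <- Rabs_Ropp. replace (- (- f y - - f x)) with (f y - f x) by ring. auto.
Qed.

Lemma scont_plus f g : scont f -> scont g -> scont (fun p => f p + g p).
Proof.
  intros Hf Hg x eps He.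
  destruct (Hf x (eps / 2)) as (d1 & Hd1 & H1); [lra|].
  destruct (Hg x (eps / 2)) as (d2 & Hd2 & H2); [lra|].
  exists (Rmin d1 d2). split; [apply Rmin_pos; assumption|]. intros y Hy.
  specialize (H1 y (Rlt_le_trans _ _ _ Hy (Rmin_l _ _))).
  specialize (H2 y (Rlt_le_trans _ _ _ Hy (Rmin_r _ _))).
  replace (f y + g y - (f x + g x)) with ((f y - f x) + (g y - g x)) by ring.
  pose proof (Rabs_triang (f y - f x) (g y - g x)). lra.
Qed.

Lemma scont_minus f g : scont f -> scont g -> scont (fun p => f p - g p).
Proof. intros Hf Hg. apply scont_plus; [exact Hf | now apply scont_opp]. Qed.

Lemma scont_mult f g : scont f -> scont g -> scont (fun p => f p * g p).
Proof.
  intros Hf Hg x eps He.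
  set (C := Rabs (f x) + Rabs (g x) + 1).
  assert (HC : 1 <= C) by (unfold C; pose proof (Rabs_pos (f x)); pose proof (Rabs_pos (g x)); lra).
  set (e := Rmin 1 (eps / C)).
  assert (He0 : 0 < e) by (apply Rmin_pos; [lra | apply Rdiv_lt_0_compat; lra]).
  assert (HeC : e * C <= eps).
  { pose proof (Rmin_r 1 (eps / C)) as Hr. apply (Rmult_le_compat_r C) in Hr; [|lra].
    unfold e. replace (eps / C * C) with eps in Hr by (field; lra). exact Hr. }
  destruct (Hf x e He0) as (d1 & Hd1 & H1). destruct (Hg x e He0) as (d2 & Hd2 & H2).
  exists (Rmin d1 d2). split; [apply Rmin_pos; assumption|]. intros y Hy.
  specialize (H1 y (Rlt_le_trans _ _ _ Hy (Rmin_l _ _))).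
  specialize (H2 y (Rlt_le_trans _ _ _ Hy (Rmin_r _ _))).
  replace (f y * g y - f x * g x)
    with ((f y - f x) * (g y - g x) + f x * (g y - g x) + g x * (f y - f x)) by ring.
  pose proof (Rmin_l 1 (eps / C)) as He1. fold e in He1.
  pose proof (Rabs_pos (f y - f x)). pose proof (Rabs_pos (g y - g x)).
  pose proof (Rabs_pos (f x)). pose proof (Rabs_pos (g x)).
  pose proof (Rabs_triang ((f y - f x) * (g y - g x) + f x * (g y - g x)) (g x * (f y - f x))).
  pose proof (Rabs_triang ((f y - f x) * (g y - g x)) (f x * (g y - g x))).
  rewrite !Rabs_mult in *.
  assert (Rabs (f y - f x) * Rabs (g y - g x) <= e * 1) by (apply Rmult_le_compat; lra).
  assert (Rabs (f x) * Rabs (g y - g x) <= Rabs (f x) * e) by (apply Rmult_le_compat_l; lra).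
  assert (Rabs (g x) * Rabs (f y - f x) < Rabs (g x) * e + e) by nra.
  unfold C in HeC. nra.
Qed.

Lemma scont_le_adherent f a S x : scont f -> (forall y, S y -> f y <= a) ->
  (forall eps, 0 < eps -> exists y, S y /\ sdist x y < eps) -> f x <= a.
Proof.
  intros Hf Ha Hx. apply Rnot_lt_le. intro Hlt.
  destruct (Hf x (f x - a)) as (del & Hdel & H); [lra|].
  destruct (Hx del Hdel) as (y & Sy & Hy). specialize (H y Hy). specialize (Ha y Sy).
  apply Rabs_def2 in H. lra.
Qed.

(* mget and vget read every index >= 2 as index 2. *)
Definition clamp (i : nat) : nat := match i with 0 => 0 | 1 => 1 | _ => 2 end%nat.

Lemma mget_mk_mat f i j : mget (mk_mat f) i j = f (clamp i) (clamp j).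
Proof. destruct i as [|[|i]]; destruct j as [|[|j]]; reflexivity. Qed.

Lemma vget_mk_vec f k : vget (mk_vec f) k = f (clamp k).
Proof. destruct k as [|[|k]]; reflexivity. Qed.

Definition mcont (F : state -> mat3) : Prop := forall i j, scont (fun p => mget (F p) i j).
Definition vcont (F : state -> vec3) : Prop := forall k, scont (fun p => vget (F p) k).

Lemma mcont_const M : mcont (fun _ => M).
Proof. intros i j. apply scont_const. Qed.

Lemma vcont_const v : vcont (fun _ => v).
Proof. intro k. apply scont_const. Qed.

Lemma mcont_mk_mat (g : state -> nat -> nat -> R) :
  (forall i j, scont (fun p => g p i j)) -> mcont (fun p => mk_mat (g p)).
Proof.
  intros H i j. apply (scont_ext (fun p => g p (clamp i) (clamp j))); [|apply H].
  intro p. symmetry. apply mget_mk_mat.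
Qed.

Lemma vcont_mk_vec (g : state -> nat -> R) :
  (forall k, scont (fun p => g p k)) -> vcont (fun p => mk_vec (g p)).
Proof.
  intros H k. apply (scont_ext (fun p => g p (clamp k))); [|apply H].
  intro p. symmetry. apply vget_mk_vec.
Qed.

Lemma scont_sum3 (g : state -> nat -> R) :
  (forall k, scont (fun p => g p k)) -> scont (fun p => sum3 (g p)).
Proof. intro H. unfold sum3. repeat apply scont_plus; apply H. Qed.

Lemma mcont_msub F G : mcont F -> mcont G -> mcont (fun p => msub (F p) (G p)).
Proof. intros HF HG. apply mcont_mk_mat. intros. now apply scont_minus. Qed.

Lemma mcont_transpose F : mcont F -> mcont (fun p => transpose (F p)).
Proof. intro HF. apply mcont_mk_mat. intros. apply HF. Qed.

Lemma mcont_mmul F G : mcont F -> mcont G -> mcont (fun p => mmul (F p) (G p)).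
Proof. intros HF HG. apply mcont_mk_mat. intros. apply scont_sum3. intro. now apply scont_mult. Qed.

Lemma vcont_mvmul F G : mcont F -> vcont G -> vcont (fun p => mvmul (F p) (G p)).
Proof. intros HF HG. apply vcont_mk_vec. intros. apply scont_sum3. intro. now apply scont_mult. Qed.

Lemma vcont_vsub F G : vcont F -> vcont G -> vcont (fun p => vsub (F p) (G p)).
Proof. intros HF HG. apply vcont_mk_vec. intros. now apply scont_minus. Qed.

Lemma scont_dot F G : vcont F -> vcont G -> scont (fun p => dot (F p) (G p)).
Proof. intros HF HG. apply scont_sum3. intro. now apply scont_mult. Qed.

Lemma scont_frob F G : mcont F -> mcont G -> scont (fun p => frob_inner (F p) (G p)).
Proof.
  intros HF HG. apply scont_sum3. intro k.
  apply (mcont_mmul (fun p => transpose (F p))); [apply mcont_transpose|]; assumption.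
Qed.

Lemma scont_det F : mcont F -> scont (fun p => det (F p)).
Proof.
  intro HF. unfold det.
  repeat (apply scont_minus || apply scont_plus || apply scont_mult); apply HF.
Qed.

Definition tn_of_state (p : state) : Tn 12 R :=
  let '((a1, a2, a3), (a4, a5, a6), (a7, a8, a9), (a10, a11, a12)) := p in
  (a1, (a2, (a3, (a4, (a5, (a6, (a7, (a8, (a9, (a10, (a11, (a12, tt)))))))))))).

Definition state_of_tn (t : Tn 12 R) : state :=
  let '(a1, (a2, (a3, (a4, (a5, (a6, (a7, (a8, (a9, (a10, (a11, (a12, _)))))))))))) := t in
  ((a1, a2, a3), (a4, a5, a6), (a7, a8, a9), (a10, a11, a12)).

Definition const_state (c : R) : state := ((c, c, c), (c, c, c), (c, c, c), (c, c, c)).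

Lemma snorm_bounded_n p M : snorm p <= M ->
  bounded_n 12 (tn_of_state (const_state (- M))) (tn_of_state (const_state M)) (tn_of_state p).
Proof.
  intro H. assert (Hc : forall a, a * a <= frob_inner (fst p) (fst p) + dot (snd p) (snd p) ->
    - M <= a <= M).
  { intros a Ha. apply Rabs_le_between. eapply Rle_trans; [|exact H]. now apply Rabs_le_sqrt. }
  clear H. destruct_all. simpl in *. expand.
  repeat split; apply Hc; squares_nonneg; lra.
Qed.

Lemma sdist_lt_of_close_n x t d : 0 < d -> close_n 12 d (tn_of_state x) t ->
  sdist (state_of_tn t) x < 4 * d.
Proof.
  intros Hd Hclose. unfold sdist, snorm.
  destruct_all. destruct t as (b1 & b2 & b3 & b4 & b5 & b6 & b7 & b8 & b9 & b10 & b11 & b12 & []).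
  simpl in Hclose |- *. expand.
  repeat match type of Hclose with
    | Rabs _ < _ /\ _ => let H := fresh in destruct Hclose as [H Hclose];
                         apply Rabs_lt_between in H
    end.
  apply sqrt_lt_of_sq_lt; [squares_nonneg; lra | lra | nra].
Qed.

(* Heine-Borel, through Cousin's lemma for boxes in R^12 (compactness_list): the gauge at a point
   is a radius whose ball lies in one open set of the cover, or misses S. *)
Lemma bounded_closed_compact (S : state -> Prop) M :
  (forall p, S p -> snorm p <= M) ->
  (forall x, (forall eps, 0 < eps -> exists y, S y /\ sdist x y < eps) -> S x) ->
  is_compact S.
Proof.
  intros Hbd Hcl Idx O HO Hcov.
  set (inside := fun (x : state) (r : R) (i : Idx) => forall y, sdist x y < 4 * r -> O i y).
  set (good := fun x (r : posreal) =>
    (S x /\ exists i, inside x r i) \/ (~ S x /\ forall y, sdist x y < 4 * r -> ~ S y)).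
  assert (Hgood : forall t, exists r, good (state_of_tn t) r).
  { intro t. set (x := state_of_tn t). destruct (classic (S x)) as [Sx|nSx].
    - destruct (Hcov x Sx) as [i Oi]. destruct (HO i x Oi) as (eps & He & Hball).
      exists (mkposreal (eps / 4) ltac:(lra)). left. split; [exact Sx|].
      exists i. intros y Hy. apply Hball. simpl in Hy. lra.
    - destruct (classic (exists eps, 0 < eps /\ forall y, sdist x y < eps -> ~ S y))
        as [(eps & He & Hball) | Hno].
      + exists (mkposreal (eps / 4) ltac:(lra)). right. split; [exact nSx|].
        intros y Hy. apply Hball. simpl in Hy. lra.
      + exfalso. apply nSx, Hcl. intros eps He. apply NNPP. intro Hn. apply Hno.
        exists eps. split; [exact He|]. intros y Hy Sy. apply Hn. now exists y. }
  destruct (choice _ Hgood) as [delta Hdelta].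
  apply NNPP. intro Hfin.
  apply (compactness_list 12 (tn_of_state (const_state (- M))) (tn_of_state (const_state M)) delta).
  intros [l Hl].
  destruct (list_choice (fun t => S (state_of_tn t))
                        (fun t i => inside (state_of_tn t) (delta t) i) l) as [li Hli].
  { intros t St. destruct (Hdelta t) as [[_ Hi] | [nSt _]]; [exact Hi | contradiction]. }
  apply Hfin. exists li. intros x Sx.
  destruct (Hl (tn_of_state x) (snorm_bounded_n x M (Hbd x Sx))) as (t & Ht & _ & Hclose).
  pose proof (sdist_lt_of_close_n x t (delta t) (cond_pos (delta t)) Hclose) as Hdist.
  destruct (Hdelta t) as [[St _] | [_ Hmiss]].
  - destruct (Hli t Ht St) as (i & Hi & Hin). exists i. split; [exact Hi|]. now apply Hin.
  - exfalso. exact (Hmiss x Hdist Sx).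
Qed.

(** * Directional derivatives *)

Lemma derive_orth_defect_sq k Rm H :
  derivable_pt_lim (fun t => k / 4 * frob_inner (orth_defect (madd Rm (mscale t H)))
                                               (orth_defect (madd Rm (mscale t H)))) 0
    (k * frob_inner (mmul Rm (orth_defect Rm)) H).
Proof. destruct_all. apply is_derive_Reals. expand. auto_derive; [tauto|]. field. Qed.

Lemma derive_energy_sq k I w v c : transpose I = I ->
  derivable_pt_lim (fun t => k / 2 * ((Efun I (vadd w (vscale t v)) - c)
                                      * (Efun I (vadd w (vscale t v)) - c))) 0
    (k * (Efun I w - c) * dot (mvmul I w) v).
Proof.
  intro HT. destruct I as [[[[i1 i2] i3] [[i4 i5] i6]] [[i7 i8] i9]].
  expand. injection HT; intros; subst i4 i7 i8.
  destruct_all. apply is_derive_Reals. expand. auto_derive; [tauto|]. field.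
Qed.

Lemma derive_momentum_sq k I Rm H w v q :
  derivable_pt_lim
    (fun t => k / 2 * dot (vsub (pifun I (madd Rm (mscale t H)) (vadd w (vscale t v))) q)
                          (vsub (pifun I (madd Rm (mscale t H)) (vadd w (vscale t v))) q)) 0
    (k * dot (vsub (pifun I Rm w) q) (vadd (mvmul H (mvmul I w)) (mvmul Rm (mvmul I v)))).
Proof. destruct_all. apply is_derive_Reals. expand. auto_derive; [tauto|]. field. Qed.

Lemma gradient_pairing_expand k0 k1 k2 e I Rm H w v d : transpose I = I ->
  frob_inner (madd (mscale k0 (mmul Rm (orth_defect Rm))) (mscale k2 (outer d (mvmul I w)))) H
  + dot (mvmul I (vadd (vscale (k1 * e) w) (vscale k2 (mvmul (transpose Rm) d)))) v
  = k0 * frob_inner (mmul Rm (orth_defect Rm)) H + k1 * e * dot (mvmul I w) v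
    + k2 * dot d (vadd (mvmul H (mvmul I w)) (mvmul Rm (mvmul I v))).
Proof.
  intro HT. destruct I as [[[[i1 i2] i3] [[i4 i5] i6]] [[i7 i8] i9]].
  expand. injection HT; intros; subst i4 i7 i8. destruct_all. expand. ring.
Qed.


(** * The Lyapunov function *)

Section Lyapunov.

Variables (I R0 : mat3) (Om0 : vec3) (k0 k1 k2 : R).

Definition dE (p : state) : R := Efun I (snd p) - Efun I Om0.
Definition dpi (p : state) : vec3 := vsub (pifun I (fst p) (snd p)) (pifun I R0 Om0).

Definition Vpoly (p : state) : R :=
  k0 / 4 * frob_inner (orth_defect (fst p)) (orth_defect (fst p))
  + k1 / 2 * (dE p * dE p) + k2 / 2 * dot (dpi p) (dpi p).

(* For symmetric I the gradient of V at p is (gradR p, I (gradW p)). *)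
Definition gradR (p : state) : mat3 :=
  madd (mscale k0 (mmul (fst p) (orth_defect (fst p))))
       (mscale k2 (outer (dpi p) (mvmul I (snd p)))).
Definition gradW (p : state) : vec3 :=
  vadd (vscale (k1 * dE p) (snd p)) (vscale k2 (mvmul (transpose (fst p)) (dpi p))).

Definition Eref : R := Efun I Om0.
Definition Pref : R := dot (pifun I R0 Om0) (pifun I R0 Om0).

(* The third bound is what keeps lam below eta in lambda_small. *)
Definition small_errors (eta : R) (p : state) : Prop :=
  frob_inner (orth_defect (fst p)) (orth_defect (fst p)) <= eta * eta /\
  Rabs (dE p) <= eta * Eref /\
  16 * k1 * Rabs (dE p) * Eref <= eta * k2 * Pref /\
  4 * dot (dpi p) (dpi p) <= Pref.

Lemma Vfun_Vpoly : Vfun I R0 Om0 k0 k1 k2 = Vpoly.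
Proof.
  apply functional_extensionality. intro p.
  unfold Vfun, Vpoly, frob_norm, vnorm, dE, dpi, orth_defect. cbv zeta.
  rewrite pow2_sqrt by apply frob_self_nonneg. rewrite pow2_sqrt by apply dot_self_nonneg.
  rewrite pow2_abs. ring.
Qed.

Lemma Vpoly_derivative p h : transpose I = I ->
  derivable_pt_lim (fun t => Vpoly (sadd p (sscale t h))) 0
    (frob_inner (gradR p) (fst h) + dot (mvmul I (gradW p)) (snd h)).
Proof.
  intro HT. unfold gradR, gradW. rewrite gradient_pairing_expand by exact HT.
  apply derivable_pt_lim_plus; [apply derivable_pt_lim_plus|].
  - apply derive_orth_defect_sq.
  - apply derive_energy_sq, HT.
  - apply derive_momentum_sq.
Qed.

Lemma gradient_identity p :
  msub (mmul (transpose (fst p)) (gradR p)) (outer (gradW p) (mvmul I (snd p)))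
  = madd (mscale k0 (madd (orth_defect (fst p)) (mmul (orth_defect (fst p)) (orth_defect (fst p)))))
         (mscale (- (k1 * dE p)) (outer (snd p) (mvmul I (snd p)))).
Proof.
  unfold gradR, gradW. rewrite mmul_transpose_gradient_form, gram_eq_defect.
  generalize (orth_defect (fst p)) (mvmul (transpose (fst p)) (dpi p)) (dE p) (mvmul I (snd p)).
  destruct p as [Rm w]. simpl. mat_ring.
Qed.

Hypothesis HI : sym_posdef I.
Hypotheses (Hk0 : 0 < k0) (Hk1 : 0 < k1) (Hk2 : 0 < k2).

Lemma critical_Vpoly_iff p : critical Vpoly p <-> gradR p = mzero /\ gradW p = vzero.
Proof.
  destruct HI as [HT Hpos]. unfold critical. split.
  - intro Hc.
    assert (Hdir : forall h, frob_inner (gradR p) (fst h) + dot (mvmul I (gradW p)) (snd h) = 0)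
      by (intro h; exact (uniqueness_limite _ 0 _ _ (Vpoly_derivative p h HT) (Hc h))).
    split.
    + apply frob_self_eq0. specialize (Hdir (gradR p, vzero)). simpl in Hdir.
      rewrite dot_comm, dot_vzero_l in Hdir. lra.
    + apply NNPP. intro Hn. specialize (Hdir (mzero, gradW p)). simpl in Hdir.
      rewrite frob_mzero_r, dot_comm in Hdir. pose proof (Hpos _ Hn). lra.
  - intros [HR HW] h. pose proof (Vpoly_derivative p h HT) as D.
    rewrite HR, HW, frob_mzero_l, mvmul_vzero, dot_vzero_l, Rplus_0_r in D. exact D.
Qed.

Lemma Vpoly_nonneg p : 0 <= Vpoly p.
Proof.
  unfold Vpoly. pose proof (frob_self_nonneg (orth_defect (fst p))).
  pose proof (Rle_0_sqr (dE p)). pose proof (dot_self_nonneg (dpi p)). unfold Rsqr in *.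
  repeat apply Rplus_le_le_0_compat; apply Rmult_le_pos; lra.
Qed.

Lemma Vpoly_eq0_iff p : Vpoly p = 0 <->
  orth_defect (fst p) = mzero /\ dE p = 0 /\ dpi p = vzero.
Proof.
  unfold Vpoly. pose proof (frob_self_nonneg (orth_defect (fst p))) as H1.
  pose proof (Rle_0_sqr (dE p)) as H2. pose proof (dot_self_nonneg (dpi p)) as H3.
  unfold Rsqr in H2. split.
  - intro H. assert (0 <= k0 / 4 * frob_inner (orth_defect (fst p)) (orth_defect (fst p)))
      by (apply Rmult_le_pos; lra).
    assert (0 <= k1 / 2 * (dE p * dE p)) by (apply Rmult_le_pos; lra).
    assert (0 <= k2 / 2 * dot (dpi p) (dpi p)) by (apply Rmult_le_pos; lra).
    split; [|split].
    + apply frob_self_eq0. apply (Rmult_eq_reg_l (k0 / 4)); lra.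
    + apply Rsqr_0_uniq. apply (Rmult_eq_reg_l (k1 / 2)); unfold Rsqr; lra.
    + apply dot_self_eq0. apply (Rmult_eq_reg_l (k2 / 2)); lra.
  - intros (-> & -> & ->). rewrite frob_mzero_l, dot_vzero_l. ring.
Qed.

Lemma critical_rank_one p : gradR p = mzero -> gradW p = vzero ->
  madd (orth_defect (fst p)) (mmul (orth_defect (fst p)) (orth_defect (fst p)))
  = mscale (k1 * dE p / k0) (outer (snd p) (mvmul I (snd p))).
Proof.
  intros HR HW. apply mscale_solve; [lra|].
  rewrite <- gradient_identity, HR, HW. apply mmul_mzero_sub_outer_vzero.
Qed.

Lemma critical_momentum_error p : gradW p = vzero ->
  mvmul (transpose (fst p)) (dpi p) = vscale (- (k1 * dE p) / k2) (snd p).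
Proof. intro HW. apply vadd_vscale_solve; [lra | exact HW]. Qed.

Lemma critical_without_energy_error p : det (fst p) <> 0 ->
  gradR p = mzero -> gradW p = vzero -> dE p = 0 -> Vpoly p = 0.
Proof.
  intros Hdet HR HW He. apply Vpoly_eq0_iff. split; [|split; [exact He|]].
  - pose proof (critical_rank_one p HR HW) as H.
    rewrite He, Rmult_0_r, Rdiv_0_l, mscale_0 in H.
    apply (mmul_injective (mmul (transpose (fst p)) (fst p))).
    + rewrite det_gram. now apply Rmult_integral_contrapositive.
    + now rewrite gram_eq_defect, mmul_shifted_defect.
  - pose proof (critical_momentum_error p HW) as H.
    rewrite He, Rmult_0_r, Ropp_0, Rdiv_0_l, vscale_0 in H.
    apply (mvmul_injective (transpose (fst p))); [now rewrite det_transpose | exact H].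
Qed.

Lemma critical_eigenvector p : gradR p = mzero -> gradW p = vzero -> dE p <> 0 -> snd p <> vzero ->
  exists mu beta, 0 < mu /\ mvmul I (snd p) = vscale mu (snd p) /\
    mvmul (orth_defect (fst p)) (snd p) = vscale beta (snd p) /\
    beta + beta * beta = k1 * dE p / k0 * (mu * dot (snd p) (snd p)).
Proof.
  intros HR HW He Hw. pose proof (critical_rank_one p HR HW) as Hrank.
  set (w := snd p) in *. set (t := k1 * dE p / k0) in *.
  assert (Hn : 0 < dot w w) by (apply dot_self_pos; exact Hw).
  assert (Ht : t <> 0).
  { unfold t, Rdiv. repeat apply Rmult_integral_contrapositive_currified; try lra.
    apply Rinv_neq_0_compat. lra. }
  assert (Hwu : 0 < dot (mvmul I w) w) by (rewrite dot_comm; apply (proj2 HI); exact Hw).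
  set (mu := dot (mvmul I w) w / dot w w).
  assert (Hmu : mvmul I w = vscale mu w).
  { apply (symmetric_outer_parallel w (mvmul I w) t Hn Ht).
    rewrite <- Hrank. apply orth_defect_quadratic_symmetric. }
  destruct (rank_one_quadratic_eigen (orth_defect (fst p)) w (mvmul I w) t Hn)
    as (beta & HAw & Hbeta); [apply Rmult_integral_contrapositive; lra | exact Hrank |].
  exists mu, beta. split; [apply Rdiv_lt_0_compat; assumption|].
  split; [exact Hmu|]. split; [exact HAw|].
  rewrite Hbeta, Hmu, dot_vscale_l. reflexivity.
Qed.

Lemma critical_momentum p mu beta : det (fst p) <> 0 -> gradW p = vzero ->
  mvmul I (snd p) = vscale mu (snd p) ->
  mvmul (orth_defect (fst p)) (snd p) = vscale beta (snd p) -> mu * (1 + beta) <> 0 ->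
  dpi p = vscale (- (k1 * dE p / (k2 * (mu * (1 + beta))))) (pifun I (fst p) (snd p)) /\
  dot (pifun I (fst p) (snd p)) (pifun I (fst p) (snd p))
  = mu * mu * (1 + beta) * dot (snd p) (snd p).
Proof.
  intros Hdet HW Hmu HA Hmb.
  set (Rm := fst p) in *. set (w := snd p) in *. set (pi := pifun I Rm w).
  assert (Hpi : mvmul (transpose Rm) pi = vscale (mu * (1 + beta)) w).
  { unfold pi, pifun. rewrite mvmul_mmul, <- mvmul_mmul, gram_eq_defect, mvmul_madd, mvmul_mid,
      Hmu, mvmul_vscale, HA. generalize w. mat_ring. }
  split.
  - apply (mvmul_cancel (transpose Rm)); [now rewrite det_transpose|].
    rewrite mvmul_vscale, Hpi, vscale_vscale.
    unfold Rm. rewrite (critical_momentum_error p HW). f_equal. field.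
    repeat split; try lra; intro Hz; apply Hmb; rewrite Hz; ring.
  - transitivity (dot (mvmul Rm (mvmul I w)) pi); [unfold pi, pifun; now rewrite mvmul_mmul|].
    rewrite dot_mvmul, Hpi, Hmu, dot_vscale_l, dot_vscale_r. ring.
Qed.

Hypotheses (HR0 : SO3 R0) (HOm0 : Om0 <> vzero).

Lemma Eref_pos : 0 < Eref.
Proof. unfold Eref, Efun. pose proof (proj2 HI Om0 HOm0). lra. Qed.

Lemma Pref_pos : 0 < Pref.
Proof.
  apply dot_self_pos. intro Hz. unfold pifun in Hz. rewrite mvmul_mmul in Hz.
  apply mvmul_injective in Hz; [|destruct HR0 as [_ ->]; lra].
  pose proof (proj2 HI Om0 HOm0) as H. rewrite Hz, dot_vzero_r in H. lra.
Qed.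

Lemma small_errors_snd_nonzero eta p : eta < 1 -> small_errors eta p -> snd p <> vzero.
Proof.
  intros Heta (_ & He & _) Hw. pose proof Eref_pos. unfold dE in He. rewrite Hw in He.
  replace (Efun I vzero) with 0 in He by (unfold Efun; rewrite dot_vzero_l; ring).
  fold Eref in He. rewrite Rminus_0_l, Rabs_Ropp, Rabs_pos_eq in He by lra. nra.
Qed.

Lemma critical_eigenvalue_ratio eta p : 0 < eta <= / 100 -> det (fst p) <> 0 ->
  small_errors eta p -> gradR p = mzero -> gradW p = vzero -> dE p <> 0 ->
  exists mu r, 0 < mu /\ det (msub I (mscale mu mid)) = 0 /\ Pref / (2 * Eref) = mu * r /\
    r <> 1 /\ Rabs (r - 1) <= 5 * eta.
Proof.
  intros Heta Hdet Hsmall HR HW He.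
  assert (Hw : snd p <> vzero) by (apply (small_errors_snd_nonzero eta); [lra | exact Hsmall]).
  destruct (critical_eigenvector p HR HW He Hw) as (mu & beta & Hmu & HIw & HAw & Hbeta).
  destruct Hsmall as (HA & HdE & HdE' & Hd).
  assert (Hb : Rabs beta <= eta).
  { pose proof (eigenvalue_sq_le_frob _ _ _ Hw HAw). apply Rabs_le. split; nra. }
  assert (Hmb : mu * (1 + beta) <> 0) by (apply Rabs_le_between in Hb; nra).
  destruct (critical_momentum p mu beta Hdet HW HIw HAw Hmb) as [Hdpi HQ].
  set (lam := k1 * dE p / (k2 * (mu * (1 + beta)))) in Hdpi.
  set (pi := pifun I (fst p) (snd p)) in *.
  assert (HE : Efun I (snd p) = mu * dot (snd p) (snd p) / 2)
    by (unfold Efun; rewrite HIw, dot_vscale_r; lra).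
  assert (HEe : Efun I (snd p) = Eref + dE p) by (unfold dE, Eref; ring).
  assert (HP : Pref = (1 + lam) * (1 + lam) * dot pi pi).
  { unfold Pref. rewrite (vsub_eq_vscale pi _ lam Hdpi), dot_vscale_l, dot_vscale_r. ring. }
  assert (Hdd : 4 * (lam * lam * dot pi pi) <= Pref).
  { rewrite Hdpi, dot_vscale_l, dot_vscale_r in Hd. lra. }
  destruct (eigenvalue_ratio_near_one (dE p) lam beta mu (dot (snd p) (snd p)) (dot pi pi)
              (Efun I (snd p)) Eref Pref k0 k1 k2 eta Hk0 Hk1 Hk2 Eref_pos Pref_pos
              (dot_self_pos _ Hw) Hmu Heta He Hb Hbeta eq_refl HQ HE HEe HP Hdd HdE HdE')
    as (r & Hr & Hr1 & Hr5).
  exists mu, r. split; [exact Hmu|]. split; [|auto].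
  apply (det_eq0_of_kernel _ _ Hw). now rewrite mvmul_msub_scalar, HIw, vsub_diag.
Qed.

Lemma small_critical_points_vanish : exists eta, 0 < eta <= / 100 /\
  forall p, det (fst p) <> 0 -> small_errors eta p -> gradR p = mzero -> gradW p = vzero ->
  Vpoly p = 0.
Proof.
  set (mu0 := Pref / (2 * Eref)).
  assert (Hmu0 : 0 < mu0)
    by (pose proof Eref_pos; pose proof Pref_pos; apply Rdiv_lt_0_compat; lra).
  destruct (eigenvalue_isolated I mu0) as (del & Hdel & Hiso).
  set (eta := Rmin (/ 100) (del / (20 * mu0))).
  assert (Heta : 0 < eta <= / 100).
  { split; [apply Rmin_pos; [lra | apply Rdiv_lt_0_compat; lra] | apply Rmin_l]. }
  assert (Heta_del : 20 * mu0 * eta <= del).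
  { pose proof (Rmin_r (/ 100) (del / (20 * mu0))) as Hr. fold eta in Hr.
    apply (Rmult_le_compat_l (20 * mu0)) in Hr; [|lra].
    replace (20 * mu0 * (del / (20 * mu0))) with del in Hr by (field; lra). exact Hr. }
  exists eta. split; [exact Heta|]. intros p Hdet Hsmall HR HW.
  destruct (Req_dec (dE p) 0) as [He|He]; [now apply critical_without_energy_error|].
  exfalso.
  destruct (critical_eigenvalue_ratio eta p Heta Hdet Hsmall HR HW He)
    as (mu & r & Hmu & Hroot & Hmu0r & Hr1 & Hr). fold mu0 in Hmu0r.
  apply Rabs_le_between in Hr.
  assert (Hmu_mu0 : mu = mu0).
  { apply Hiso; [exact Hroot|]. rewrite Hmu0r.
    replace (mu - mu * r) with (- (mu * (r - 1))) by ring. rewrite Rabs_Ropp, Rabs_mult,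
      Rabs_pos_eq by lra.
    assert (Rabs (r - 1) <= 5 * eta) by (apply Rabs_le; lra).
    assert (mu <= 2 * mu0) by nra. nra. }
  apply Hr1. apply (Rmult_eq_reg_l mu); lra.
Qed.

Lemma sublevel_small_errors eta : 0 < eta -> exists c, 0 < c /\ c < k0 / 4 /\
  c < k1 * Eref / 2 /\ c < k2 * Pref / 2 /\ forall p, Vpoly p <= c -> small_errors eta p.
Proof.
  intro Heta. pose proof Eref_pos as HE. pose proof Pref_pos as HP.
  set (q := eta * k2 * Pref / (16 * k1 * Eref)).
  assert (Hq : 0 < q).
  { assert (0 < eta * k2 * Pref) by (apply Rmult_lt_0_compat; [apply Rmult_lt_0_compat|]; lra).
    assert (0 < 16 * k1 * Eref) by (apply Rmult_lt_0_compat; [apply Rmult_lt_0_compat|]; lra).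
    apply Rdiv_lt_0_compat; assumption. }
  destruct (exists_below_all (k0 / 4 :: k1 * Eref / 2 :: k2 * Pref / 2 :: k0 * (eta * eta) / 4
      :: k1 * ((eta * Eref) * (eta * Eref)) / 2 :: k1 * (q * q) / 2 :: k2 * Pref / 8 :: nil))
    as (c & Hc & Hall).
  { assert (0 < eta * Eref) by (apply Rmult_lt_0_compat; lra).
    repeat (apply List.Forall_cons;
      [repeat (assumption || apply Rdiv_lt_0_compat || apply Rmult_lt_0_compat); lra|]).
    apply List.Forall_nil. }
  repeat rewrite List.Forall_cons_iff in Hall.
  destruct Hall as (H1 & H2 & H3 & H4 & H5 & H6 & H7 & _).
  exists c. split; [exact Hc|]. split; [exact H1|]. split; [exact H2|]. split; [exact H3|].
  intros p Hp. unfold Vpoly in Hp.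
  pose proof (frob_self_nonneg (orth_defect (fst p))). pose proof (Rle_0_sqr (dE p)).
  pose proof (dot_self_nonneg (dpi p)). unfold Rsqr in *.
  assert (0 <= k0 / 4 * frob_inner (orth_defect (fst p)) (orth_defect (fst p)))
    by (apply Rmult_le_pos; lra).
  assert (0 <= k1 / 2 * (dE p * dE p)) by (apply Rmult_le_pos; lra).
  assert (0 <= k2 / 2 * dot (dpi p) (dpi p)) by (apply Rmult_le_pos; lra).
  assert (Hsq : forall b, 0 <= b -> k1 / 2 * (dE p * dE p) < k1 * (b * b) / 2 -> Rabs (dE p) <= b).
  { intros b Hb Hlt. apply Rabs_le. assert (dE p * dE p < b * b) by nra. split; nra. }
  split; [|split; [|split]].
  - apply (Rmult_le_reg_l (k0 / 4)); lra.
  - apply Hsq; nra.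
  - assert (Hle : Rabs (dE p) <= q) by (apply Hsq; lra).
    apply (Rmult_le_compat_l (16 * k1 * Eref)) in Hle; [|nra].
    unfold q in Hle. replace (16 * k1 * Eref * (eta * k2 * Pref / (16 * k1 * Eref)))
      with (eta * k2 * Pref) in Hle by (field; repeat split; lra). lra.
  - apply (Rmult_le_reg_l (k2 / 2)); lra.
Qed.

Lemma small_errors_det eta p : 0 <= eta <= / 100 -> small_errors eta p ->
  / 4 <= det (fst p) * det (fst p).
Proof.
  intros Heta [HA _]. rewrite <- det_gram, gram_eq_defect. apply det_near_identity. nra.
Qed.

Lemma small_errors_bounded eta : 0 <= eta <= / 100 ->
  exists M, forall p, small_errors eta p -> snorm p <= M.
Proof.
  intro Heta. pose proof Eref_pos.
  destruct (posdef_sublevel_bounded I (4 * Eref) HI) as [M HM].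
  exists (sqrt (4 + M)). intros p (HA & He & _). apply sqrt_le_1_alt.
  assert (HR : frob_inner (fst p) (fst p) <= 4).
  { unfold frob_inner at 1. rewrite gram_eq_defect, trace_shift.
    assert (Hsmall : frob_inner (orth_defect (fst p)) (orth_defect (fst p)) <= / 10000) by nra.
    pose proof (frob_small_entry _ 0 0 Hsmall). pose proof (frob_small_entry _ 1 1 Hsmall).
    pose proof (frob_small_entry _ 2 2 Hsmall). lra. }
  assert (Hw : dot (snd p) (snd p) <= M).
  { apply HM. unfold dE, Efun in He. fold (Efun I Om0) in He. fold Eref in He.
    apply Rabs_le_between in He. nra. }
  lra.
Qed.

Lemma scont_Vpoly : scont Vpoly.
Proof.
  assert (HR : mcont fst) by exact scont_mget.
  assert (Hw : vcont snd) by exact scont_vget.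
  assert (HA : mcont (fun p => orth_defect (fst p))).
  { apply mcont_msub; [apply mcont_mmul; [apply mcont_transpose|]|apply mcont_const]; exact HR. }
  assert (HE : scont dE).
  { apply scont_minus; [|apply scont_const]. apply scont_mult; [apply scont_const|].
    apply scont_dot; [exact Hw|]. apply vcont_mvmul; [apply mcont_const | exact Hw]. }
  assert (Hd : vcont dpi).
  { apply vcont_vsub; [|apply vcont_const].
    apply vcont_mvmul; [apply mcont_mmul; [exact HR | apply mcont_const] | exact Hw]. }
  unfold Vpoly. repeat apply scont_plus; apply scont_mult; try apply scont_const.
  - now apply scont_frob.
  - now apply scont_mult.
  - now apply scont_dot.
Qed.

Lemma sublevel_compact eta c : 0 <= eta <= / 100 ->
  (forall p, Vpoly p <= c -> small_errors eta p) ->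
  is_compact (fun p => U p /\ 0 <= Vpoly p <= c).
Proof.
  intros Heta Hsmall. destruct (small_errors_bounded eta Heta) as [M HM].
  apply (bounded_closed_compact _ M); [intros p (_ & _ & Hp); exact (HM p (Hsmall p Hp))|].
  intros x Hx. split; [|split; [apply Vpoly_nonneg|]].
  - (* det R >= 1/2 on the sublevel set, and this closed condition passes to the limit. *)
    unfold U. enough (- det (fst x) <= - / 2) by lra.
    apply (scont_le_adherent (fun p => - det (fst p)) _ (fun p => U p /\ 0 <= Vpoly p <= c) x);
      [| |exact Hx].
    + apply scont_opp, scont_det. exact scont_mget.
    + intros y (Hy & _ & Hyc). pose proof (small_errors_det eta y Heta (Hsmall y Hyc)).
      unfold U in Hy. nra.
  - apply (scont_le_adherent Vpoly c (fun p => U p /\ 0 <= Vpoly p <= c) x scont_Vpoly);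
      [intros y (_ & _ & Hy); exact Hy | exact Hx].
Qed.

Lemma sublevel_critical_iff eta c p : 0 <= c ->
  (forall q, det (fst q) <> 0 -> small_errors eta q -> gradR q = mzero -> gradW q = vzero ->
     Vpoly q = 0) ->
  (forall q, Vpoly q <= c -> small_errors eta q) ->
  ((U p /\ 0 <= Vpoly p <= c) /\ critical Vpoly p) <-> (U p /\ Vpoly p = 0).
Proof.
  intros Hc Hcrit Hsmall. rewrite critical_Vpoly_iff. unfold U. split.
  - intros ((HU & _ & Hp) & HR & HW). split; [exact HU|].
    apply Hcrit; [lra | exact (Hsmall p Hp) | exact HR | exact HW].
  - intros (HU & H0). split; [split; [exact HU | lra]|].
    apply Vpoly_eq0_iff in H0 as (HA & He & Hd). unfold gradR, gradW. rewrite HA, He, Hd.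
    split; mat_ring.
Qed.

Lemma zero_set_iff p : (U p /\ Vpoly p = 0) <->
  (SO3 (fst p) /\ Efun I (snd p) = Efun I Om0 /\ pifun I (fst p) (snd p) = pifun I R0 Om0).
Proof.
  rewrite Vpoly_eq0_iff, SO3_iff_defect. unfold U, dE, dpi. rewrite vsub_eq_vzero.
  split; intros H; repeat match goal with H : _ /\ _ |- _ => destruct H end;
    repeat split; try assumption; lra.
Qed.

End Lyapunov.

Theorem lemma4 (I R0 : mat3) (Om0 : vec3) (k0 k1 k2 : R)
  (HI : sym_posdef I) (HR0 : SO3 R0) (HOm0 : Om0 <> vzero)
  (Hk0 : 0 < k0) (Hk1 : 0 < k1) (Hk2 : 0 < k2) :
  let E0 := Efun I Om0 in
  let pi0 := pifun I R0 Om0 in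
  let V := Vfun I R0 Om0 k0 k1 k2 in
  exists c : R,
    0 < c /\ c < k0 / 4 /\ c < k1 * Rabs E0 / 2 /\ c < k2 * (vnorm pi0) ^ 2 / 2 /\
    (forall p, (U p /\ 0 <= V p <= c) -> U p) /\
    is_compact (fun p => U p /\ 0 <= V p <= c) /\
    (forall p, ((U p /\ 0 <= V p <= c) /\ critical V p) <-> (U p /\ V p = 0)) /\
    (forall p, (U p /\ V p = 0) <->
       (SO3 (fst p) /\ Efun I (snd p) = E0 /\ pifun I (fst p) (snd p) = pi0)).
Proof.
  intros E0 pi0 V.
  assert (HE0 : Rabs E0 = Eref I Om0)
    by (apply Rabs_pos_eq; pose proof (Eref_pos I Om0 HI HOm0); unfold Eref in *; lra).
  assert (Hpi0 : vnorm pi0 ^ 2 = Pref I R0 Om0)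
    by (unfold vnorm; apply pow2_sqrt, dot_self_nonneg).
  unfold V. rewrite Vfun_Vpoly, HE0, Hpi0.
  destruct (small_critical_points_vanish I R0 Om0 k0 k1 k2 HI Hk0 Hk1 Hk2 HR0 HOm0)
    as (eta & Heta & Hcrit).
  destruct (sublevel_small_errors I R0 Om0 k0 k1 k2 HI Hk0 Hk1 Hk2 HR0 HOm0 eta)
    as (c & Hc & Hck0 & Hck1 & Hck2 & Hsmall); [lra|].
  exists c. do 4 (split; [assumption|]). split; [tauto|]. split; [|split].
  - apply (sublevel_compact I R0 Om0 k0 k1 k2 HI Hk0 Hk1 Hk2 HOm0 eta); [lra | exact Hsmall].
  - intro p. apply (sublevel_critical_iff I R0 Om0 k0 k1 k2 HI Hk0 Hk1 Hk2 eta); [lra|assumption..].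
  - apply zero_set_iff; assumption.
Qed.
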